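(* Let $(\alpha_n)_{n\ge0}$ be complex numbers with $0<|\alpha_n|<1$ for all $n$, and let $\mu_{n,r,s}$ be as in the context. For all nonnegative integers $n,r,s$, \[ \mu_{n,r,s}=\sum_{p\in\mathrm{Sch}_{n,r,s}}\mathrm{wt}_S(p). \]
   Context: For a polynomial $f(z)=\sum_{k=0}^n a_kz^k$ of degree $n$, write $\overline{f}(z)=\sum_k\overline{a_k}z^k$ and $f^*(z)=z^n\overline{f}(1/z)$. Define monic $\Phi_n$ by $\Phi_0=1$, $\Phi_{n+1}(z)=z\Phi_n(z)-\overline{\alpha_n}\Phi_n^*(z)$. Let $\mathcal{L}$ be the unique linear functional on Laurent polynomials with $\mathcal{L}(1)=1$ and $\mathcal{L}(\Phi_m(z)\overline{\Phi_n}(1/z))=0$ for $m\neq n$; set $\langle f,g\rangle=\mathcal{L}(f(z)\overline{g}(1/z))$ and $\mu_{n,r,s}=\langle\Phi_s(z),z^n\Phi_r(z)\rangle/\langle\Phi_s,\Phi_s\rangle$. Set $\alpha_{-1}=-1$. A Schröder path is a lattice path in $\mathbb{Z}\times\mathbb{Z}_{\ge0}$ with steps $(1,1)$, $(1,0)$, $(0,-1)$; $\mathrm{Sch}_{n,r,s}$ is the set of Schröder paths from $(0,r)$ to $(n,s)$ that do not start with a vertical down-step $(0,-1)$. The weight $\mathrm{wt}_S(p)$ is the product of step weights: $(a,b)\to(a+1,b+1)$ has weight $1$; $(a,b)\to(a+1,b)$ has weight $-\overline{\alpha_{b-1}}/\overline{\alpha_b}$; $(a,b)\to(a,b-1)$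 has weight $\frac{\overline{\alpha_{b-2}}}{\overline{\alpha_{b-1}}}(1-|\alpha_{b-1}|^2)$. *)

From HB Require Import structures.
From mathcomp Require Import all_boot all_order all_algebra.
From mathcomp Require Import complex.
From mathcomp Require Import reals.
Set Implicit Arguments. Unset Strict Implicit. Unset Printing Implicit Defensive.
Import Order.TTheory GRing.Theory Num.Theory.
Local Open Scope ring_scope.

Section Defs.
Variable C : numClosedFieldType.

(* f^*(z) = z^deg f * conj(f)(1/z), with deg f = (size f).-1 *)
Definition pstar (f : {poly C}) : {poly C} :=
  \poly_(i < size f) (f`_((size f).-1 - i))^*.

Fixpoint Phi (a : nat -> C) (n : nat) : {poly C} :=
  match n with
  | 0 => 1
  | m.+1 => 'X * Phi a m - (a m)^* *: pstar (Phi a m)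
  end.

(* A linear functional L on Laurent polynomials is encoded by its moments
   c k = L(z^k), k : int.  Then <f,g> = L(f(z) conj(g)(1/z))
   = sum_{i,j} f_i conj(g_j) c (i - j). *)
Definition ip (c : int -> C) (f g : {poly C}) : C :=
  \sum_(i < size f) \sum_(j < size g) f`_i * (g`_j)^* * c (i%:Z - j%:Z).

Definition mu (a : nat -> C) (c : int -> C) (n r s : nat) : C :=
  ip c (Phi a s) ('X^n * Phi a r) / ip c (Phi a s) (Phi a s).

Definition aext (a : nat -> C) (k : int) : C :=
  match k with Posz m => a m | Negz _ => -1 end.

(* Schroeder steps: U = (1,1), H = (1,0), D = (0,-1) *)
Inductive step := U | H | D.

Fixpoint all_seqs (k : nat) : seq (seq step) :=
  match k with
  | 0 => [:: [::]]
  | k'.+1 => flatten [seq [:: U :: p; H :: p; D :: p] | p <- all_seqs k']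
  end.

Fixpoint valid_from (x y n s : nat) (p : seq step) : bool :=
  match p with
  | [::] => (x == n) && (y == s)
  | U :: q => valid_from x.+1 y.+1 n s q
  | H :: q => valid_from x.+1 y n s q
  | D :: q => (0 < y)%N && valid_from x y.-1 n s q
  end.

Definition is_sch (n r s : nat) (p : seq step) : bool :=
  valid_from 0 r n s p &&
  (match p with D :: _ => false | _ => true end).

Definition step_wt (a : nat -> C) (b : nat) (st : step) : C :=
  match st with
  | U => 1
  | H => - (aext a (b%:Z - 1))^* / (aext a b%:Z)^*
  | D => (aext a (b%:Z - 2))^* / (aext a (b%:Z - 1))^*
            * (1 - `|aext a (b%:Z - 1)| ^+ 2)
  end.

Definition step_next (b : nat) (st : step) : nat :=
  match st with U => b.+1 | H => b | D => b.-1 end.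

Fixpoint wtS (a : nat -> C) (b : nat) (p : seq step) : C :=
  match p with
  | [::] => 1
  | st :: q => step_wt a b st * wtS a (step_next b st) q
  end.

(* sum over Sch_{n,r,s}: every such path has length n + #D <= 2n + r,
   since #D = r + #U - s <= r + n; paths of each length k are enumerated
   (without repetition) by all_seqs k. *)
Definition sch_sum (a : nat -> C) (n r s : nat) : C :=
  \sum_(k < (2 * n + r).+1) \sum_(p <- all_seqs k | is_sch n r s p) wtS a r p.

End Defs.

From HB Require Import structures.
From mathcomp Require Import all_boot all_order all_algebra.
From mathcomp Require Import complex.
From mathcomp Require Import reals.
From mathcomp Require Import zify ring.
Import Order.TTheory GRing.Theory Num.Theory.
Local Open Scope ring_scope.
Set Implicit Arguments. Unset Strict Implicit. Unset Printing Implicit Defensive.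

(* Write Psi_y = Phi_y^* / (-alpha_{y-1}).  The Szego recursion and its reversed form read
     z Phi_y = Psi_{y+1} + conj(w_H(y)) Psi_y,    Psi_{y+1} = Phi_{y+1} + conj(w_D(y+1)) Psi_y,
   so expanding z^n Phi_r in the basis (Phi_s) -- an up or horizontal step for each factor z,
   a down step for each unfolding of a Psi -- produces the conjugated total weights of the
   Schroder paths from (0,r) to (n,s).  Orthogonality extracts the coefficient of Phi_s, and
   <Phi_s, Phi_s> = prod_(k<s) (1 - |alpha_k|^2) <1, 1> is nonzero. *)

Arguments Phi : simpl never.
Arguments step_wt : simpl never.

Section PathSums.
Variables (C : numClosedFieldType) (a : nat -> C).

Lemma big_all_seqsS k (F : seq step -> C) :
  \sum_(p <- all_seqs k.+1) F p =
  \sum_(p <- all_seqs k) (F (U :: p) + F (H :: p) + F (D :: p)).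
Proof.
rewrite /= big_flatten big_map; apply: eq_bigr => p _.
by rewrite !big_cons big_nil /= addr0 addrA.
Qed.

Lemma valid_from_gt x y n s p : (n < x)%N -> valid_from x y n s p = false.
Proof.
elim: p x y => [|st p IHp] x y /= lt_nx; first by rewrite gtn_eqF.
by case: st; rewrite IHp ?andbF //; lia.
Qed.

Lemma step_wtU y : step_wt a y U = 1.
Proof. by []. Qed.

Definition wpaths (n s k x y : nat) : C :=
  \sum_(p <- all_seqs k) wtS a y p *+ valid_from x y n s p.

Lemma wpaths0 n s x y : wpaths n s 0 x y = ((x == n) && (y == s))%:R.
Proof. by rewrite /wpaths big_seq1. Qed.

Lemma wpathsS n s k x y :
  wpaths n s k.+1 x y =
    wpaths n s k x.+1 y.+1 + step_wt a y H * wpaths n s k x.+1 y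
    + (if y is y'.+1 then step_wt a y D * wpaths n s k x y' else 0).
Proof.
rewrite /wpaths big_all_seqsS; case: y => [|y]; rewrite !mulr_sumr -!big_split ?addr0 /=;
  by apply: eq_bigr => p _; rewrite step_wtU mul1r !mulrnAr ?mulr0n ?addr0.
Qed.

Lemma wpaths_gt n s k x y : (n < x)%N -> wpaths n s k x y = 0.
Proof. by move=> lt_nx; rewrite /wpaths big1 // => p; rewrite valid_from_gt. Qed.

(* [schw n y s] is the total weight of the Schroder paths from (0,y) to (n,s) that do not
   start with a down step: each up or horizontal step is followed by its maximal run of
   down steps, summed by [down_run].  [schw_down] also allows an initial run of down steps. *)
Fixpoint down_run (f : nat -> C) (y : nat) : C :=
  f y + if y is y'.+1 then step_wt a y D * down_run f y' else 0.

Fixpoint schw (n y s : nat) : C :=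
  if n is n'.+1 then down_run (schw n' ^~ s) y.+1 + step_wt a y H * down_run (schw n' ^~ s) y
  else (y == s)%:R.

Definition schw_down (n y s : nat) : C := down_run (schw n ^~ s) y.

Lemma sum_wpaths n s K x y : (x <= n)%N -> (2 * (n - x) + y < K)%N ->
  \sum_(k < K) wpaths n s k x y = schw_down (n - x) y s.
Proof.
elim: K x y => [|K IHK] x y le_xn ltK; first by lia.
rewrite big_ord_recl wpaths0.
under eq_bigr => k _ do rewrite /bump /= wpathsS.
rewrite !big_split /= -!mulr_sumr.
have first_step : ((x == n) && (y == s))%:R + \sum_(k < K) wpaths n s k x.+1 y.+1
    + step_wt a y H * \sum_(k < K) wpaths n s k x.+1 y = schw (n - x) y s.
  have [lt_xn | ge_xn] := ltnP x n.
    rewrite (ltn_eqF lt_xn) add0r !IHK; try lia.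
    by have -> : (n - x = (n - x.+1).+1)%N by lia.
  have -> : x = n by lia.
  have out y' : \sum_(k < K) wpaths n s k n.+1 y' = 0.
    by apply: big1 => k _; rewrite wpaths_gt.
  by rewrite !out subnn eqxx mulr0 !addr0.
rewrite !addrA first_step /schw_down; case: y ltK {first_step} => [|y] ltK /=.
  by rewrite big1_eq.
by rewrite -mulr_sumr IHK //; lia.
Qed.

Lemma sum_sch_pathsS n r s k :
  \sum_(p <- all_seqs k.+1 | is_sch n r s p) wtS a r p =
  wpaths n s k 1 r.+1 + step_wt a r H * wpaths n s k 1 r.
Proof.
rewrite big_mkcond big_all_seqsS /wpaths mulr_sumr -big_split /=.
by apply: eq_bigr => p _; rewrite /is_sch /= !andbT andbF -!mulrb step_wtU mul1r mulrnAr addr0.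
Qed.

Lemma sch_sumE n r s : sch_sum a n r s = schw n r s.
Proof.
rewrite /sch_sum big_ord_recl big_mkcond big_seq1 /is_sch /= andbT.
under eq_bigr => k _ do rewrite /bump /= add0n sum_sch_pathsS.
rewrite big_split /= -mulr_sumr.
case: n => [|n].
  have out K y : \sum_(k < K) wpaths 0 s k 1 y = 0.
    by apply: big1 => k _; rewrite wpaths_gt.
  by rewrite !out mulr0 !addr0 /= -mulrb.
by rewrite add0r !sum_wpaths ?subn1 //; lia.
Qed.

End PathSums.

Section Reversal.
Variable C : numClosedFieldType.
Implicit Types f g : {poly C}.

Definition pstar_deg (m : nat) f : {poly C} := \poly_(i < m.+1) (f`_(m - i))^*.

Lemma pstar_degB m k f g :
  pstar_deg m (f - k *: g) = pstar_deg m f - k^* *: pstar_deg m g.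
Proof.
apply/polyP => i; rewrite coefB coefZ !coef_poly coefB coefZ.
by case: ifP; rewrite ?mulr0 ?subr0 // rmorphB rmorphM.
Qed.

Lemma pstar_deg_mulX m f : pstar_deg m.+1 ('X * f) = pstar_deg m f.
Proof.
apply/polyP => i; rewrite !coef_poly coefXM.
case: (ltnP i m.+1) => [lt_im | le_mi]; first by rewrite ltnS ltnW // subSn.
by case: ltnP => // lt_i_m2; rewrite (_ : (m.+1 - i = 0)%N) ?conjC0 //; lia.
Qed.

Lemma pstar_degK m f : (size f <= m.+1)%N -> pstar_deg m.+1 (pstar_deg m f) = 'X * f.
Proof.
move=> le_fm; apply/polyP => i; rewrite !coef_poly coefXM.
case: i => [|i] /=; first by rewrite ltnn conjC0.
rewrite !ltnS subSS leq_subr conjCK; case: leqP => [le_im | lt_mi].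
  by rewrite subKn.
by rewrite nth_default //; apply: leq_trans le_fm lt_mi.
Qed.
End Reversal.

Section Szego.
Variables (C : numClosedFieldType) (a : nat -> C).

Lemma size_Phi n : size (Phi a n) = n.+1.
Proof.
elim: n => [|n IHn]; first by rewrite size_poly1.
have Phi_neq0 : Phi a n != 0 by rewrite -size_poly_eq0 IHn.
have -> : Phi a n.+1 = 'X * Phi a n - (a n)^* *: pstar (Phi a n) by [].
rewrite mulrC size_polyDl size_mulX ?IHn // size_polyN.
apply: leq_ltn_trans (size_scale_leq _ _) _.
by apply: leq_ltn_trans (size_poly _ _) _; rewrite IHn.
Qed.

Lemma pstar_Phi n : pstar (Phi a n) = pstar_deg n (Phi a n).
Proof. by rewrite /pstar size_Phi. Qed.

Lemma PhiS n : Phi a n.+1 = 'X * Phi a n - (a n)^* *: pstar_deg n (Phi a n).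
Proof. by rewrite -pstar_Phi. Qed.

Lemma pstar_PhiS n :
  pstar_deg n.+1 (Phi a n.+1) = pstar_deg n (Phi a n) - a n *: ('X * Phi a n).
Proof. by rewrite PhiS pstar_degB pstar_deg_mulX pstar_degK ?size_Phi // conjCK. Qed.

Definition aprev (y : nat) : C := aext a (y%:Z - 1).

Lemma aprev0 : aprev 0 = -1.
Proof. by []. Qed.

Lemma aprevS y : aprev y.+1 = a y.
Proof. by rewrite /aprev (_ : y.+1%:Z - 1 = y%:Z) //; lia. Qed.

Lemma conj_step_wt_H y : (step_wt a y H)^* = - aprev y / a y.
Proof. by rewrite /step_wt rmorphM rmorphN fmorphV /= !conjCK. Qed.

Lemma conj_step_wt_D y :
  (step_wt a y.+1 D)^* = aprev y / a y * (1 - `|a y| ^+ 2).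
Proof.
rewrite /step_wt (_ : y.+1%:Z - 2 = y%:Z - 1); last by lia.
rewrite (_ : y.+1%:Z - 1 = y%:Z); last by lia.
by rewrite !rmorphM fmorphV rmorphB rmorph1 /= !conjCK rmorphXn /= geC0_conj.
Qed.

Definition Psi (y : nat) : {poly C} := (- aprev y)^-1 *: pstar_deg y (Phi a y).

Lemma Psi0 : Psi 0 = Phi a 0.
Proof.
rewrite /Psi (_ : Phi a 0 = 1) // aprev0 opprK invr1 scale1r.
by apply/polyP => i; rewrite coef_poly !coef1; case: i => [|i] //=; rewrite conjC1.
Qed.

Hypothesis a_neq0 : forall k, a k != 0.

Lemma aprev_neq0 y : aprev y != 0.
Proof. by case: y => [|y]; rewrite ?aprevS // aprev0 oppr_eq0 oner_eq0. Qed.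

Lemma mulX_Phi y : 'X * Phi a y = Psi y.+1 + (step_wt a y H)^* *: Psi y.
Proof.
have aprev_y := aprev_neq0 y; have a_y := a_neq0 y.
rewrite conj_step_wt_H /Psi pstar_PhiS aprevS.
by apply/polyP => i; rewrite !(coefD, coefB, coefN, coefZ); field; rewrite ?oppr_eq0 ?aprev_y ?a_y.
Qed.

Lemma PsiS y : Psi y.+1 = Phi a y.+1 + (step_wt a y.+1 D)^* *: Psi y.
Proof.
have aprev_y := aprev_neq0 y; have a_y := a_neq0 y.
rewrite conj_step_wt_D normCK /Psi pstar_PhiS aprevS {1}PhiS.
by apply/polyP => i; rewrite !(coefD, coefB, coefN, coefZ); field; rewrite ?oppr_eq0 ?aprev_y ?a_y.
Qed.

Lemma Psi_expansion n B :
  (forall y, (n + y < B)%N ->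
     'X^n * Phi a y = \sum_(s < B) (schw a n y s)^* *: Phi a s) ->
  forall y, (n + y < B)%N ->
     'X^n * Psi y = \sum_(s < B) (schw_down a n y s)^* *: Phi a s.
Proof.
move=> XnPhiE; elim=> [|y IHy] ltB.
  by rewrite Psi0 XnPhiE //; apply: eq_bigr => s _; rewrite /schw_down /= addr0.
rewrite PsiS mulrDr -scalerAr XnPhiE // IHy; last by lia.
rewrite scaler_sumr -big_split; apply: eq_bigr => s _ /=.
by rewrite scalerA -scalerDl /schw_down /= rmorphD rmorphM.
Qed.

Lemma Phi_expansion n B y : (n + y < B)%N ->
  'X^n * Phi a y = \sum_(s < B) (schw a n y s)^* *: Phi a s.
Proof.
elim: n y => [|n IHn] y ltB.
  rewrite expr0 mul1r (bigD1 (Ordinal ltB)) //= eqxx conjC_nat scale1r big1 ?addr0 //.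
  move=> s neq_sy; rewrite (_ : (y == s) = false) ?conjC_nat ?scale0r //.
  by apply/negbTE; apply: contra neq_sy => /eqP eq_ys; apply/eqP/val_inj.
rewrite exprS -mulrA mulrCA mulX_Phi mulrDr -[X in _ + X]scalerAr.
rewrite !(Psi_expansion IHn); try lia.
rewrite scaler_sumr -big_split; apply: eq_bigr => s _ /=.
by rewrite scalerA -scalerDl -rmorphM -rmorphD.
Qed.

Lemma Psi_span y : Psi y = \sum_(s < y.+1) (schw_down a 0 y s)^* *: Phi a s.
Proof.
rewrite -[Psi y]mul1r -(expr0 'X).
by apply: Psi_expansion => // y' lt_y'; apply: Phi_expansion.
Qed.

End Szego.

Lemma sum_ord_widen (V : nmodType) m N (F : nat -> V) :
  (m <= N)%N -> (forall i, (m <= i)%N -> F i = 0) ->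
  \sum_(i < m) F i = \sum_(i < N) F i.
Proof.
move=> le_mN F_out; rewrite (big_ord_widen _ _ le_mN) big_mkcond /=.
by apply: eq_bigr => i _; case: ltnP => // /F_out ->.
Qed.

Lemma sum_ord_delta (V : nmodType) B m (F : nat -> V) :
  (forall s, s != m -> F s = 0) -> \sum_(s < B) F s = if (m < B)%N then F m else 0.
Proof.
move=> F_out; rewrite (bigID (fun s : 'I_B => val s == m)) /= big_ord1_eq.
by rewrite big1 ?addr0 // => s /F_out.
Qed.

Section InnerProduct.
Variables (C : numClosedFieldType) (c : int -> C).
Implicit Types f g h : {poly C}.

Definition ip_upto (N : nat) f g : C :=
  \sum_(i < N) \sum_(j < N) f`_i * (g`_j)^* * c (i%:Z - j%:Z).

Lemma ipE N f g : (size f <= N)%N -> (size g <= N)%N -> ip c f g = ip_upto N f g.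
Proof.
move=> le_fN le_gN; rewrite /ip /ip_upto.
rewrite (sum_ord_widen (F := fun i => \sum_(j < size g) f`_i * (g`_j)^* * c (i%:Z - j%:Z)) le_fN).
  apply: eq_bigr => i _.
  apply: (sum_ord_widen (F := fun j => f`_i * (g`_j)^* * c (i%:Z - j%:Z))) => // j le_gj.
  by rewrite (nth_default 0 le_gj) conjC0 mulr0 mul0r.
by move=> i le_fi; apply: big1 => j _; rewrite (nth_default 0 le_fi) !mul0r.
Qed.

Lemma ipDl f g h : ip c (f + g) h = ip c f h + ip c g h.
Proof.
have le_fg := size_polyD f g.
rewrite !(ipE (N := size f + size g + size h)) /ip_upto; try lia.
rewrite -big_split; apply: eq_bigr => i _; rewrite -big_split; apply: eq_bigr => j _ /=.
by rewrite coefD !mulrDl.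
Qed.

Lemma ipZl k f h : ip c (k *: f) h = k * ip c f h.
Proof.
have le_kf := size_scale_leq k f.
rewrite !(ipE (N := size f + size h)) /ip_upto; try lia.
rewrite mulr_sumr; apply: eq_bigr => i _; rewrite mulr_sumr; apply: eq_bigr => j _.
by rewrite coefZ !mulrA.
Qed.

Lemma ipDr f g h : ip c h (f + g) = ip c h f + ip c h g.
Proof.
have le_fg := size_polyD f g.
rewrite !(ipE (N := size f + size g + size h)) /ip_upto; try lia.
rewrite -big_split; apply: eq_bigr => i _; rewrite -big_split; apply: eq_bigr => j _ /=.
by rewrite coefD rmorphD mulrDr mulrDl.
Qed.

Lemma ipZr k f h : ip c h (k *: f) = k^* * ip c h f.
Proof.
have le_kf := size_scale_leq k f.
rewrite !(ipE (N := size f + size h)) /ip_upto; try lia.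
rewrite mulr_sumr; apply: eq_bigr => i _; rewrite mulr_sumr; apply: eq_bigr => j _.
by rewrite coefZ rmorphM; ring.
Qed.

Lemma ipBl f g h : ip c (f - g) h = ip c f h - ip c g h.
Proof. by rewrite -scaleN1r ipDl ipZl mulN1r. Qed.

Lemma ipBr f g h : ip c h (f - g) = ip c h f - ip c h g.
Proof. by rewrite -scaleN1r ipDr ipZr rmorphN1 mulN1r. Qed.

Lemma ip0l h : ip c 0 h = 0.
Proof. by rewrite /ip size_poly0 big_ord0. Qed.

Lemma ip0r h : ip c h 0 = 0.
Proof. by rewrite /ip size_poly0; apply: big1 => i _; rewrite big_ord0. Qed.

Lemma ip_suml B (F : 'I_B -> {poly C}) h :
  ip c (\sum_(s < B) F s) h = \sum_(s < B) ip c (F s) h.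
Proof. exact: (big_morph _ (fun f g => ipDl f g h) (ip0l h)). Qed.

Lemma ip_sumr B (F : 'I_B -> {poly C}) h :
  ip c h (\sum_(s < B) F s) = \sum_(s < B) ip c h (F s).
Proof. exact: (big_morph _ (fun f g => ipDr f g h) (ip0r h)). Qed.

Lemma ip_mulX f g : ip c ('X * f) ('X * g) = ip c f g.
Proof.
have le_Xf := size_polyMleq 'X f; have le_Xg := size_polyMleq 'X g.
rewrite size_polyX in le_Xf le_Xg.
rewrite (ipE (N := (size f + size g).+1)) ?(ipE (N := size f + size g)) /ip_upto; try lia.
rewrite big_ord_recl big1 ?add0r => [|j _]; last by rewrite coefXM /= !mul0r.
apply: eq_bigr => i _; rewrite big_ord_recl !coefXM /= add0n conjC0 mulr0 mul0r add0r.
apply: eq_bigr => j _; rewrite !coefXM /= !add0n.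
by congr (_ * c _); rewrite /bump /=; lia.
Qed.

Lemma ip_pstar_deg m f : (size f <= m.+1)%N ->
  ip c (pstar_deg m f) (pstar_deg m f) = ip c f f.
Proof.
move=> le_fm; have le_star := size_poly m.+1 (fun i => (f`_(m - i))^*).
rewrite !(ipE (N := m.+1)) // /ip_upto [RHS]exchange_big /= (reindex_inj rev_ord_inj) /=.
apply: eq_bigr => i _; rewrite (reindex_inj rev_ord_inj) /=.
apply: eq_bigr => j _; have lt_im := ltn_ord i; have lt_jm := ltn_ord j.
rewrite !coef_poly /= !rev_ord_proof !subKn // conjCK [_ * f`_j]mulrC.
by congr (_ * c _); lia.
Qed.

End InnerProduct.

Section Orthogonality.
Variables (C : numClosedFieldType) (a : nat -> C) (c : int -> C).
Hypothesis Phi_orth : forall m k, m != k -> ip c (Phi a m) (Phi a k) = 0.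

Lemma ip_Phi_sumr B (k : nat -> C) m :
  ip c (Phi a m) (\sum_(s < B) k s *: Phi a s) =
  if (m < B)%N then (k m)^* * ip c (Phi a m) (Phi a m) else 0.
Proof.
rewrite ip_sumr (@sum_ord_delta _ B m (fun s => ip c (Phi a m) (k s *: Phi a s))).
  by rewrite ipZr.
by move=> s ne_sm; rewrite ipZr Phi_orth ?mulr0 // eq_sym.
Qed.

Lemma ip_Phi_suml B (k : nat -> C) m :
  ip c (\sum_(s < B) k s *: Phi a s) (Phi a m) =
  if (m < B)%N then k m * ip c (Phi a m) (Phi a m) else 0.
Proof.
rewrite ip_suml (@sum_ord_delta _ B m (fun s => ip c (k s *: Phi a s) (Phi a m))).
  by rewrite ipZl.
by move=> s ne_sm; rewrite ipZl Phi_orth ?mulr0.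
Qed.

Hypothesis a_neq0 : forall k, a k != 0.

Lemma ip_PhiS y :
  ip c (Phi a y.+1) (Phi a y.+1) = (1 - `|a y| ^+ 2) * ip c (Phi a y) (Phi a y).
Proof.
set P := pstar_deg y (Phi a y).
have P_Psi : P = - aprev a y *: Psi a y.
  by rewrite /Psi scalerA mulfV ?scale1r // oppr_eq0 aprev_neq0.
have orth_r : ip c (Phi a y.+1) P = 0.
  by rewrite P_Psi ipZr Psi_span // (@ip_Phi_sumr _ (fun s => (schw_down a 0 y s)^*)) ltnn mulr0.
have orth_l : ip c P (Phi a y.+1) = 0.
  by rewrite P_Psi ipZl Psi_span // (@ip_Phi_suml _ (fun s => (schw_down a 0 y s)^*)) ltnn mulr0.
have XPhiE : 'X * Phi a y = Phi a y.+1 + (a y)^* *: P by rewrite PhiS subrK.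
have ip_P_XPhi : ip c P ('X * Phi a y) = a y * ip c (Phi a y) (Phi a y).
  by rewrite XPhiE ipDr ipZr conjCK orth_l add0r ip_pstar_deg ?size_Phi.
rewrite {2}PhiS ipBr ipZr conjCK orth_r mulr0 subr0.
rewrite PhiS ipBl ipZl ip_P_XPhi ip_mulX normCK; ring.
Qed.

End Orthogonality.

Section Moments.
Variables (C : numClosedFieldType) (a : nat -> C) (c : int -> C).
Hypothesis a_bounds : forall k, 0 < `|a k| < 1.
Hypothesis c0 : c 0 = 1.
Hypothesis Phi_orth : forall m k, m != k -> ip c (Phi a m) (Phi a k) = 0.

Let a_neq0 k : a k != 0.
Proof. by rewrite -normr_gt0; case/andP: (a_bounds k). Qed.

Lemma ip_Phi_neq0 y : ip c (Phi a y) (Phi a y) != 0.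
Proof.
elim: y => [|y IHy].
  by rewrite (_ : Phi a 0 = 1) // /ip size_poly1 !big_ord1 coef1 /= conjC1 !mul1r subrr c0 oner_eq0.
rewrite ip_PhiS // mulf_neq0 // subr_eq0 eq_sym lt_eqF //.
by case/andP: (a_bounds y) => _ /exprn_ilt1 ->.
Qed.

Lemma mu_schw n r s : mu a c n r s = schw a n r s.
Proof.
rewrite /mu (Phi_expansion a_neq0 (B := (n + r + s).+1)); last by lia.
rewrite (@ip_Phi_sumr _ _ _ Phi_orth _ (fun t => (schw a n r t)^*)).
by rewrite ifT; [rewrite conjCK mulfK ?ip_Phi_neq0 | lia].
Qed.

End Moments.

Unset Implicit Arguments.

Theorem theorem3p10 (R : realType) (a : nat -> R[i]) (c : int -> R[i]) :
  (forall k, 0 < `|a k| < 1) ->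
  c 0 = 1 ->
  (forall m k, m != k -> ip c (Phi a m) (Phi a k) = 0) ->
  forall n r s : nat, mu a c n r s = sch_sum a n r s.
Proof. by move=> a_bounds c0 Phi_orth n r s; rewrite sch_sumE mu_schw. Qed.
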